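(* Let $\lambda$ be a character of $\mathcal{G}r'$. Then $\lambda$ is invertible for the product $\star$ if and only if $\lambda(\bullet_A)\neq0$ for every nonempty finite set $A$, where $\bullet_A\in\mathcal{G}r'[A]$ is the graph with the single vertex $A$.
   Context: Work over a field $\mathbb{K}$. $\mathcal{G}r'[A]$ is the vector space spanned by simple graphs $G$ whose vertex set is a partition of the finite set $A$ into nonempty blocks; bijections act on the elements of $A$; the product is disjoint union of graphs. An equivalence $\sim$ on $A$ satisfies $\sim\triangleleft G$ if elements in the same vertex of $G$ are equivalent and the induced subgraph $G_{\mid C}$ (on the vertices contained in $C$) is connected for each class $C$; then $G\mid\sim$ is the disjoint union of the $G_{\mid C}$ and $G/\sim$ has the classes of $\sim$ as vertices, two distinct classes being adjacent iff some edge of $G$ joins vertices contained in them. A character of $\mathcal{G}r'$ is a family of linear forms $\lambda[A]:\mathcal{G}r'[A]\to\mathbb{K}$ invariant under bijections, with $\lambda(GH)=\lambda(G)\lambda(H)$ and $\lambda(\text{empty graph})=1$. The product of characters is $(\lambda\star\mu)(G)=\sum_{\sim\triangleleft G}\lambda(G/\sim)\mu(G\mid\sim)$; its unit is $\varepsilon'$, with $\varepsilon'(G)=1$ if $G$ has no edge and $0$ otherwise. *)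

From HB Require Import structures.
From mathcomp Require Import all_boot all_order all_algebra.
Set Implicit Arguments. Unset Strict Implicit. Unset Printing Implicit Defensive.
Import GRing.Theory.
Local Open Scope ring_scope.

(* A raw graph on the finite set T: a set of vertices (blocks, subsets of T)
   and a set of edges (each edge is a 2-element set of vertices). *)
Definition rawgraph (T : finType) : Type :=
  ({set {set T}} * {set {set {set T}}})%type.

(* Validity: vertices form a partition of T into nonempty blocks
   (mathcomp's [partition] includes [set0 \notin V]); edges are
   2-element subsets of the vertex set (simple graph). *)
Definition is_graph (T : finType) (g : rawgraph T) : bool :=
  partition g.1 [set: T] && [forall e in g.2, (e \subset g.1) && (#|e| == 2)].

Definition graph (T : finType) := {g : rawgraph T | is_graph g}.

Definition gV (T : finType) (G : graph T) : {set {set T}} := (val G).1.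
Definition gE (T : finType) (G : graph T) : {set {set {set T}}} := (val G).2.

(* A family of (values on the basis of the) linear forms lambda[T]. *)
Definition gfamily (K : fieldType) := forall T : finType, graph T -> K.

Definition bij_invariant (K : fieldType) (lam : gfamily K) : Prop :=
  forall (T T' : finType) (f : T -> T'), bijective f ->
  forall (G : graph T) (G' : graph T'),
    gV G' = [set f @: B | B : {set T} in gV G] ->
    gE G' = [set [set f @: B | B : {set T} in e] | e : {set {set T}} in gE G] ->
    lam T' G' = lam T G.

Definition multiplicative (K : fieldType) (lam : gfamily K) : Prop :=
  forall (T1 T2 : finType) (G1 : graph T1) (G2 : graph T2)
         (G : graph (T1 + T2)%type),
    gV G = [set inl @: B | B : {set T1} in gV G1] :|: [set inr @: B | B : {set T2} in gV G2] ->
    gE G = [set [set inl @: B | B : {set T1} in e] | e : {set {set T1}} in gE G1]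
           :|: [set [set inr @: B | B : {set T2} in e] | e : {set {set T2}} in gE G2] ->
    lam _ G = lam _ G1 * lam _ G2.

(* lambda(empty graph) = 1: the empty graph is the (unique) graph on the
   empty set. *)
Definition unital (K : fieldType) (lam : gfamily K) : Prop :=
  forall (T : finType), #|T| = 0%N -> forall G : graph T, lam T G = 1.

Definition is_character (K : fieldType) (lam : gfamily K) : Prop :=
  [/\ bij_invariant lam, multiplicative lam & unital lam].

Definition induced_connected (T : finType) (G : graph T) (C : {set T}) : bool :=
  let r := [rel v w : {set T} |
             ([set v; w] \in gE G) && (v \subset C) && (w \subset C)] in
  [forall v in gV G, forall w in gV G,
     (v \subset C) ==> (w \subset C) ==> connect r v w].

(* An equivalence ~ on T is represented by its set of classes Q (a partition
   of T).  Q <| G  : elements of a same vertex are equivalent and every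
   G_{|C} is connected. *)
Definition admissible (T : finType) (G : graph T) (Q : {set {set T}}) : bool :=
  [&& partition Q [set: T],
      [forall v in gV G, exists C in Q, v \subset C] &
      [forall C in Q, induced_connected G C]].

(* G / ~ : vertices = classes; distinct classes adjacent iff some edge of G
   joins vertices contained in them.  (Falls back to G on invalid input,
   which never happens for admissible Q.) *)
Definition quot_edges (T : finType) (G : graph T) (Q : {set {set T}})
  : {set {set {set T}}} :=
  [set [set C; D] | C in Q, D in Q &
     (C != D) && [exists e in gE G, exists v : {set T}, exists w : {set T},
        [&& e == [set v; w], v \subset C & w \subset D]]].

Definition quot (T : finType) (G : graph T) (Q : {set {set T}}) : graph T :=
  insubd G (Q, quot_edges G Q).

(* G | ~ : disjoint union of the G_{|C}: same vertices, edges of G inside a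
   class. *)
Definition restr_edges (T : finType) (G : graph T) (Q : {set {set T}})
  : {set {set {set T}}} :=
  [set e in gE G | [exists C in Q, [forall v in e, v \subset C]]].

Definition restr (T : finType) (G : graph T) (Q : {set {set T}}) : graph T :=
  insubd G (gV G, restr_edges G Q).

Definition star (K : fieldType) (lam mu : gfamily K) : gfamily K :=
  fun T G => \sum_(Q : {set {set T}} | admissible G Q)
               lam T (quot G Q) * mu T (restr G Q).

Arguments star {K} lam mu T G.

Definition eps' (K : fieldType) (T : finType) (G : graph T) : K :=
  if gE G == set0 then 1 else 0.

Arguments eps' K T G : clear implicits.

Definition star_invertible (K : fieldType) (lam : gfamily K) : Prop :=
  exists mu : gfamily K, is_character mu /\
    (forall (T : finType) (G : graph T),
       star lam mu T G = eps' K T G /\ star mu lam T G = eps' K T G).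

From Pilot Require Import Defs.
From mathcomp Require Import all_boot all_order all_algebra.
From mathcomp Require Import ring.
Set Implicit Arguments. Unset Strict Implicit. Unset Printing Implicit Defensive.
Import GRing.Theory.
Local Open Scope ring_scope.

(* For an admissible partition Q of G, the graph G | Q keeps every edge of G
   exactly when Q is the partition into connected components, and G / Q is then
   edgeless.  So in (lam * mu)(G) the value mu(G) only appears multiplied by
   lam(G / components), while every other term evaluates mu on a graph with
   fewer edges: when lam does not vanish on edgeless graphs, lam * mu = eps' is
   a triangular system with a solution mu, which by associativity of * is also a
   left inverse.  An edgeless graph is a disjoint union of one-vertex graphs, so
   this non-vanishing is the condition of the theorem.  The admissible partitions
   of a disjoint union G1 + G2 are the unions of admissible partitions of G1 and
   G2; expanding lam * mu = eps' at G1 + G2 then shows, by induction on the number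
   of edges, that mu(G1 + G2) = mu(G1) mu(G2), so mu is a character.  Conversely,
   lam * mu = eps' evaluated at a one-vertex graph reads lam(G) mu(G) = 1. *)

Lemma connect_ind (S : finType) (r : rel S) (P : S -> Prop) x y :
  connect r x y -> P x -> (forall a b, P a -> r a b -> P b) -> P y.
Proof.
case/connectP => p; elim: p x => [|z p IH] x /=; first by move=> _ ->.
case/andP=> rxz pth ey Px step; exact: (IH z pth ey (step _ _ Px rxz) step).
Qed.

Lemma connect_mono (S : finType) (r r' : rel S) x y :
  (forall a b, r a b -> r' a b) -> connect r x y -> connect r' x y.
Proof.
move=> h; apply: connect_sub => a b rab; exact/connect1/h.
Qed.

Lemma partition_setTP (T : finType) (P : {set {set T}}) :
  partition P [set: T] <->
  [/\ set0 \notin P,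
      forall x, exists2 B, B \in P & x \in B &
      forall x B B', B \in P -> B' \in P -> x \in B -> x \in B' -> B = B'].
Proof.
split.
  move=> hP; have tP := partition_trivIset hP.
  case/and3P: hP => /eqP cP _ nP; split => //.
    move=> x; have xc : x \in cover P by rewrite cP inE.
    by exists (pblock P x); [exact: pblock_mem | rewrite mem_pblock].
  by move=> x B B' BP B'P xB xB'; rewrite -(def_pblock tP BP xB) (def_pblock tP B'P xB').
case=> nP cP uP; apply/and3P; split => //.
  apply/eqP/setP => x; rewrite inE; apply/bigcupP.
  by case: (cP x) => B BP xB; exists B.
apply/trivIsetP => A B AP BP nAB; rewrite -setI_eq0; apply/eqP/setP => x.
rewrite inE in_set0; apply/negP => /andP[xA xB]; case/eqP: nAB; exact: uP xA xB.
Qed.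

Lemma eq_set2 (S : finType) (a b c d : S) :
  [set a; b] = [set c; d] -> (a = c /\ b = d) \/ (a = d /\ b = c).
Proof.
move=> e.
have ha : a \in [set c; d] by rewrite -e !inE eqxx.
have hb : b \in [set c; d] by rewrite -e !inE eqxx orbT.
have hc : c \in [set a; b] by rewrite e !inE eqxx.
have hd : d \in [set a; b] by rewrite e !inE eqxx orbT.
case/set2P: ha => ?; case/set2P: hb => ?; subst; auto;
case/set2P: hc => ?; case/set2P: hd => ?; subst; auto.
Qed.

Section Partitions.
Variable T : finType.
Implicit Types (Q : {set {set T}}) (B : {set T}).

Lemma part_eq_block Q (x : T) B B' : partition Q [set: T] ->
  B \in Q -> B' \in Q -> x \in B -> x \in B' -> B = B'.
Proof. by case/partition_setTP => _ _ h; apply: h. Qed.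

Lemma part_cover Q (x : T) : partition Q [set: T] -> exists2 B, B \in Q & x \in B.
Proof. by case/partition_setTP => _ h _; apply: h. Qed.

Lemma part_block_neq0 Q B : partition Q [set: T] -> B \in Q -> exists x, x \in B.
Proof. by move=> hQ BQ; apply/set0Pn; exact: partition_neq0 hQ BQ. Qed.

Lemma part_sub_eq_block Q (v B B' : {set T}) : partition Q [set: T] -> (exists x, x \in v) ->
  B \in Q -> B' \in Q -> v \subset B -> v \subset B' -> B = B'.
Proof.
move=> hQ [x xv] BQ B'Q vB vB'.
exact: (part_eq_block hQ BQ B'Q (subsetP vB x xv) (subsetP vB' x xv)).
Qed.

End Partitions.

Section Graphs.
Variable T : finType.
Implicit Types (G : graph T) (Q : {set {set T}}).

Lemma gV_partition G : partition (gV G) [set: T].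
Proof. by case: G => [[V E] H]; rewrite /gV /=; case/andP: H. Qed.

Lemma edge_set2 G e : e \in gE G ->
  exists v w, [/\ v \in gV G, w \in gV G, v != w & e = [set v; w]].
Proof.
case: G => [[V E] HG]; rewrite /gE /gV /= => eE.
have /andP[_ /forall_inP H] := HG.
have /andP[sub c2] := H e eE.
case/cards2P: c2 => v [w [vw ee]]; exists v, w; split => //;
  apply: (subsetP sub); rewrite ee !inE eqxx ?orbT //.
Qed.

Lemma edge_vertices G v w : [set v; w] \in gE G ->
  [/\ v \in gV G, w \in gV G & v != w].
Proof.
case/edge_set2 => a [b [aV bV ab /eq_set2 [[-> ->]|[-> ->]]]]; split => //.
by rewrite eq_sym.
Qed.

Lemma single_vertex_edgeless G (A : {set T}) : gV G = [set A] -> gE G = set0.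
Proof.
move=> hG; apply/setP => e; rewrite in_set0; apply/negP => /edge_set2[v [w [vV wV vw _]]].
by move: vV wV vw; rewrite hG => /set1P -> /set1P ->; rewrite eqxx.
Qed.

Lemma vertex_neq0 G v : v \in gV G -> exists x, x \in v.
Proof. exact: part_block_neq0 (gV_partition G). Qed.

Lemma vertex_sub_eq G v w : v \in gV G -> w \in gV G -> v \subset w -> v = w.
Proof.
move=> vV wV vw; apply: (part_sub_eq_block (gV_partition G) (vertex_neq0 vV) vV wV) => //.
Qed.

Lemma admissibleP G Q : admissible G Q <->
  [/\ partition Q [set: T],
      (forall v, v \in gV G -> exists2 C, C \in Q & v \subset C) &
      (forall C, C \in Q -> induced_connected G C)].
Proof.
split.
  case/and3P => hQ /forall_inP h1 /forall_inP h2; split => // v vV.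
  by case/exists_inP: (h1 v vV) => C CQ vC; exists C.
case=> hQ h1 h2; apply/and3P; split => //; apply/forall_inP => // v vV.
by case: (h1 v vV) => C CQ vC; apply/exists_inP; exists C.
Qed.

Definition adj_in G (C : {set T}) : rel {set T} :=
  [rel v w | ([set v; w] \in gE G) && (v \subset C) && (w \subset C)].

Lemma induced_connectedP G C : induced_connected G C <->
  (forall v w, v \in gV G -> w \in gV G -> v \subset C -> w \subset C ->
     connect (adj_in G C) v w).
Proof.
rewrite /induced_connected /=; split.
  move/forall_inP => H v w vV wV vC wC.
  by have /forall_inP := H v vV; move/(_ w wV); rewrite vC wC.
move=> H; apply/forall_inP => v vV; apply/forall_inP => w wV.
by apply/implyP => vC; apply/implyP => wC; apply: H.
Qed.

Lemma connected_connect G C v w : induced_connected G C -> v \in gV G -> w \in gV G ->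
  v \subset C -> w \subset C -> connect (adj_in G C) v w.
Proof. by move/induced_connectedP; apply. Qed.

Lemma admissible_partition G Q : admissible G Q -> partition Q [set: T].
Proof. by case/admissibleP. Qed.

Lemma admissible_set0 G Q : admissible G Q -> set0 \notin Q.
Proof. by move/admissible_partition/and3P => []. Qed.

Lemma admissible_connected G Q C : admissible G Q -> C \in Q -> induced_connected G C.
Proof. by case/admissibleP => _ _; apply. Qed.

Lemma class_vertex G Q C (x : T) : admissible G Q -> C \in Q -> x \in C ->
  exists v, [/\ v \in gV G, x \in v & v \subset C].
Proof.
case/admissibleP => hQ h1 _ CQ xC.
case: (part_cover x (gV_partition G)) => v vV xv; exists v; split => //.
case: (h1 v vV) => C' C'Q vC'.
by rewrite (part_eq_block hQ CQ C'Q xC (subsetP vC' x xv)).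
Qed.

Lemma class_has_vertex G Q C : admissible G Q -> C \in Q ->
  exists v, v \in gV G /\ v \subset C.
Proof.
move=> hA CQ; case: (part_block_neq0 (admissible_partition hA) CQ) => x xC.
by case: (class_vertex hA CQ xC) => v [vV _ vC]; exists v.
Qed.

Lemma vertex_class G Q v : admissible G Q -> v \in gV G -> exists2 C, C \in Q & v \subset C.
Proof. by case/admissibleP => _ h _; apply: h. Qed.

Lemma quot_edgesP G Q e : reflect
  (exists C D v w, [/\ C \in Q, D \in Q, C != D &
      [/\ [set v; w] \in gE G, v \subset C, w \subset D & e = [set C; D]]])
  (e \in quot_edges G Q).
Proof.
apply: (iffP imset2P).
  case=> C D CQ; rewrite inE => /andP[DQ /andP[CD /exists_inP[e' e'E ex]]] ->.
  case/existsP: ex => v /existsP[w /and3P[/eqP ee vC wD]].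
  by exists C, D, v, w; split => //; rewrite -ee.
case=> C [D [v [w [CQ DQ CD [vwE vC wD ->]]]]].
exists C D => //; rewrite inE DQ CD /=; apply/exists_inP; exists [set v; w] => //.
by apply/existsP; exists v; apply/existsP; exists w; rewrite eqxx vC wD.
Qed.

Lemma quot_edge2_inv G Q X Y : [set X; Y] \in quot_edges G Q ->
  [/\ X \in Q, Y \in Q, X != Y &
   exists a b, [/\ [set a; b] \in gE G, a \subset X & b \subset Y]].
Proof.
case/quot_edgesP => C [D [v [w [CQ DQ CD [vwE vC wD /eq_set2 [[-> ->]|[-> ->]]]]]]].
  by split => //; exists v, w.
split => //; first by rewrite eq_sym.
by exists w, v; rewrite setUC.
Qed.

Lemma quot_edge2I G Q X Y a b : X \in Q -> Y \in Q -> X != Y ->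
  [set a; b] \in gE G -> a \subset X -> b \subset Y -> [set X; Y] \in quot_edges G Q.
Proof.
move=> XQ YQ XY abE aX bY; apply/quot_edgesP.
by exists X, Y, a, b; split.
Qed.

Lemma is_graph_quot G Q : partition Q [set: T] -> is_graph (Q, quot_edges G Q).
Proof.
move=> hQ; apply/andP; split => //=; apply/forall_inP => e /quot_edgesP.
case=> C [D [v [w [CQ DQ CD [_ _ _ ->]]]]].
rewrite cards2 CD andbT; apply/subsetP => x /set2P [] ->//.
Qed.

Lemma is_graph_restr G Q : is_graph (gV G, restr_edges G Q).
Proof.
apply/andP; split => /=; first exact: gV_partition.
apply/forall_inP => e; rewrite inE => /andP[eE _].
case/edge_set2: eE => v [w [vV wV vw ->]].
rewrite cards2 vw andbT; apply/subsetP => x /set2P [] ->//.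
Qed.

Lemma quot_val G Q : partition Q [set: T] -> val (quot G Q) = (Q, quot_edges G Q).
Proof. by move=> hQ; rewrite /quot insubdK //; exact: is_graph_quot. Qed.

Lemma restr_val G Q : val (restr G Q) = (gV G, restr_edges G Q).
Proof. by rewrite /restr insubdK //; exact: is_graph_restr. Qed.

Lemma gV_quot G Q : partition Q [set: T] -> gV (quot G Q) = Q.
Proof. by move=> hQ; rewrite /gV quot_val. Qed.

Lemma gE_quot G Q : partition Q [set: T] -> gE (quot G Q) = quot_edges G Q.
Proof. by move=> hQ; rewrite /gE quot_val. Qed.

Lemma gV_restr G Q : gV (restr G Q) = gV G.
Proof. by rewrite /gV restr_val. Qed.

Lemma gE_restr G Q : gE (restr G Q) = restr_edges G Q.
Proof. by rewrite /gE restr_val. Qed.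

Lemma restr_edgesP G Q e : e \in restr_edges G Q <->
  e \in gE G /\ exists2 C, C \in Q & forall v, v \in e -> v \subset C.
Proof.
rewrite inE; split.
  by case/andP => eE /exists_inP[C CQ /forall_inP h]; split => //; exists C.
case=> eE [C CQ h]; rewrite eE; apply/exists_inP; exists C => //.
by apply/forall_inP => v ve; apply: h.
Qed.

Lemma restr_edge2P G Q v w : [set v; w] \in restr_edges G Q <->
  [set v; w] \in gE G /\ exists2 C, C \in Q & (v \subset C) && (w \subset C).
Proof.
split.
  case/restr_edgesP => eE [C CQ h]; split => //; exists C => //.
  by rewrite !h // !inE eqxx ?orbT.
case=> eE [C CQ h]; apply/restr_edgesP; split => //; exists C => //.
by case/andP: h => vC wC u /set2P [] ->.
Qed.

Lemma restr_edges_sub G Q : restr_edges G Q \subset gE G.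
Proof. by apply/subsetP => e /restr_edgesP []. Qed.

Lemma graph_eq G G' : gV G = gV G' -> gE G = gE G' -> G = G'.
Proof.
move=> hV hE; apply: val_inj; move: hV hE; rewrite /gV /gE.
by case: (val G) => ? ?; case: (val G') => ? ? /= -> ->.
Qed.

Lemma restr_id G Q : restr_edges G Q = gE G -> restr G Q = G.
Proof. by move=> h; apply: graph_eq; rewrite ?gV_restr ?gE_restr. Qed.

End Graphs.

Section Components.
Variable T : finType.
Implicit Types (G : graph T) (Q : {set {set T}}).

Definition adj G : rel {set T} := [rel v w | [set v; w] \in gE G].
Definition component G (v : {set T}) : {set T} :=
  \bigcup_(w | (w \in gV G) && connect (adj G) v w) w.
Definition components G := [set component G v | v in gV G].

Lemma adj_sym G : symmetric (adj G).
Proof. by move=> a b; rewrite /adj /= setUC. Qed.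

Lemma connect_adj_sym G : connect_sym (adj G).
Proof. exact/sym_connect_sym/adj_sym. Qed.

Lemma componentP G v x : reflect (exists w, [/\ w \in gV G, connect (adj G) v w & x \in w])
  (x \in component G v).
Proof.
apply: (iffP bigcupP).
  by case=> w /andP[wV c] xw; exists w.
by case=> w [wV c xw]; exists w => //; rewrite wV.
Qed.

Lemma connect_sub_component G v u : u \in gV G -> connect (adj G) v u -> u \subset component G v.
Proof. by move=> uV c; apply/subsetP => x xu; apply/componentP; exists u. Qed.

Lemma sub_component G v : v \in gV G -> v \subset component G v.
Proof. by move=> vV; apply: connect_sub_component. Qed.

Lemma component_eq G v v' : connect (adj G) v v' -> component G v = component G v'.
Proof.
move=> c; apply/setP => x; apply/componentP/componentP => [[w [wV c' xw]]|[w [wV c' xw]]];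
  exists w; split => //.
  by apply: connect_trans c'; rewrite connect_adj_sym.
exact: connect_trans c c'.
Qed.

Lemma connect_of_sub_component G v w : w \in gV G -> w \subset component G v -> connect (adj G) v w.
Proof.
move=> wV wc; case: (vertex_neq0 wV) => x xw.
case/componentP: (subsetP wc x xw) => u [uV c xu].
by rewrite (part_eq_block (gV_partition G) wV uV xw xu).
Qed.

Lemma components_partition G : partition (components G) [set: T].
Proof.
apply/partition_setTP; split.
- apply/negP => /imsetP[v vV e]; case: (vertex_neq0 vV) => x xv.
  by have := subsetP (sub_component vV) x xv; rewrite -e in_set0.
- move=> x; case: (part_cover x (gV_partition G)) => v vV xv.
  by exists (component G v); [apply: imset_f | apply: (subsetP (sub_component vV))].
move=> x B B' /imsetP[v vV ->] /imsetP[v' v'V ->].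
case/componentP => w [wV c xw]; case/componentP => w' [w'V c' xw'].
have ww : w = w' by apply: (part_eq_block (gV_partition G) wV w'V xw xw').
by apply/component_eq/(connect_trans c); rewrite ww connect_adj_sym.
Qed.

Lemma connect_adj_in G (C : {set T}) a b : connect (adj G) a b -> a \in gV G ->
  (forall u, u \in gV G -> connect (adj G) a u -> u \subset C) ->
  connect (adj_in G C) a b.
Proof.
move=> c aV h.
suff : [/\ b \in gV G, connect (adj G) a b & connect (adj_in G C) a b] by case.
pose P u := [/\ u \in gV G, connect (adj G) a u & connect (adj_in G C) a u].
apply: (connect_ind (P := P)) c _ _.
  by split => //; apply: connect0.
move=> u u' [uV cu cu'] e; have [_ u'V _] := edge_vertices e.
have cau' : connect (adj G) a u' by apply: connect_trans cu (connect1 e).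
split => //; apply: connect_trans cu' (connect1 _).
have e' : [set u; u'] \in gE G := e.
by rewrite /adj_in /= e' (h u uV cu) (h u' u'V cau').
Qed.

Lemma adj_in_adj G C a b : adj_in G C a b -> adj G a b.
Proof. by case/andP => /andP[]. Qed.

Lemma admissible_components G : admissible G (components G).
Proof.
apply/admissibleP; split; first exact: components_partition.
  by move=> v vV; exists (component G v); [apply: imset_f | apply: sub_component].
move=> C /imsetP[v vV ->]; apply/induced_connectedP => w w' wV w'V wc w'c.
have cw := connect_of_sub_component wV wc; have cw' := connect_of_sub_component w'V w'c.
have cww' : connect (adj G) w w' by apply: connect_trans cw'; rewrite connect_adj_sym.
apply: connect_adj_in cww' wV _.
move=> u uV cu; apply: connect_sub_component uV (connect_trans cw cu).
Qed.

Lemma restr_edges_components G : restr_edges G (components G) = gE G.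
Proof.
apply/eqP; rewrite eqEsubset restr_edges_sub; apply/subsetP => e eE.
case/edge_set2: (eE) => v [w [vV wV vw ee]].
rewrite ee; apply/restr_edge2P; split; first by rewrite -ee.
exists (component G v); first by apply: imset_f.
rewrite sub_component //=; apply: connect_sub_component wV (connect1 _).
by rewrite /adj /= -ee.
Qed.

Lemma full_class_component G Q v C : admissible G Q -> restr_edges G Q = gE G ->
  v \in gV G -> C \in Q -> v \subset C -> C = component G v.
Proof.
move=> hA hF vV CQ vC; have hQ := admissible_partition hA.
apply/eqP; rewrite eqEsubset; apply/andP; split.
  apply/subsetP => x xC; case: (class_vertex hA CQ xC) => w [wV xw wC].
  have c := connected_connect (admissible_connected hA CQ) vV wV vC wC.
  apply/componentP; exists w; split => //; apply: connect_mono c; exact: adj_in_adj.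
apply/subsetP => x /componentP[w [wV c xw]].
suff [] : w \in gV G /\ w \subset C by move=> _ /subsetP; apply.
apply: (connect_ind (P := fun u => u \in gV G /\ u \subset C)) c _ _ => //.
move=> u u' [uV uC] e; have [_ u'V _] := edge_vertices e.
move: e; rewrite /adj /= -hF => /restr_edge2P [_ [C' C'Q /andP[uC' u'C']]].
by rewrite (part_sub_eq_block hQ (vertex_neq0 uV) CQ C'Q uC uC').
Qed.

Lemma components_unique G Q : admissible G Q -> restr_edges G Q = gE G -> Q = components G.
Proof.
move=> hA hF; apply/setP => C; apply/idP/imsetP.
  move=> CQ; case: (class_has_vertex hA CQ) => v [vV vC].
  by exists v => //; exact: (full_class_component hA hF vV CQ vC).
case=> v vV ->; case: (vertex_class hA vV) => C' C'Q vC'.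
by rewrite -(full_class_component hA hF vV C'Q vC').
Qed.

Lemma quot_edges_full G Q : admissible G Q -> restr_edges G Q = gE G -> quot_edges G Q = set0.
Proof.
move=> hA hF; have hQ := admissible_partition hA.
apply/setP => e; rewrite in_set0; apply/negP.
case/quot_edgesP => C [D [v [w [CQ DQ CD [vwE vC wD _]]]]].
have [vV wV _] := edge_vertices vwE.
move: vwE; rewrite -hF => /restr_edge2P[_ [E EQ /andP[vE wE]]].
case/negP: CD; apply/eqP.
rewrite (part_sub_eq_block hQ (vertex_neq0 vV) CQ EQ vC vE).
by rewrite (part_sub_eq_block hQ (vertex_neq0 wV) DQ EQ wD wE).
Qed.

Lemma quot_components_edgeless G : gE (quot G (components G)) = set0.
Proof.
rewrite gE_quot ?components_partition // quot_edges_full //.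
  exact: admissible_components.
exact: restr_edges_components.
Qed.

Lemma full_of_quot_edges0 G Q : admissible G Q -> quot_edges G Q = set0 -> restr_edges G Q = gE G.
Proof.
move=> hA h0; apply/eqP; rewrite eqEsubset restr_edges_sub; apply/subsetP => e eE.
case/edge_set2: (eE) => v [w [vV wV vw ee]].
case: (vertex_class hA vV) => C CQ vC; case: (vertex_class hA wV) => D DQ wD.
have [CD|nCD] := eqVneq C D.
  by rewrite ee; apply/restr_edge2P; split; [rewrite -ee | exists C => //; rewrite vC CD wD].
have : [set C; D] \in quot_edges G Q by apply: quot_edge2I CQ DQ nCD _ vC wD; rewrite -ee.
by rewrite h0 in_set0.
Qed.

Lemma admissible_vertices G : admissible G (gV G).
Proof.
apply/admissibleP; split; first exact: gV_partition.
  by move=> v vV; exists v.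
move=> C CV; apply/induced_connectedP => w w' wV w'V wC w'C.
by rewrite (vertex_sub_eq wV CV wC) (vertex_sub_eq w'V CV w'C) connect0.
Qed.

Lemma edgeless_class_vertex G Q C : admissible G Q -> restr_edges G Q = set0 ->
  C \in Q -> C \in gV G.
Proof.
move=> hA h0 CQ; case: (class_has_vertex hA CQ) => v [vV vC].
suff -> : C = v by [].
apply/eqP; rewrite eqEsubset vC andbT; apply/subsetP => x xC.
case: (class_vertex hA CQ xC) => w [wV xw wC].
have c := connected_connect (admissible_connected hA CQ) vV wV vC wC.
suff <- : w = v by [].
apply: (connect_ind (P := fun u => u = v)) c _ _ => // a b -> /andP[/andP[e aC] bC].
have : [set v; b] \in restr_edges G Q.
  by apply/restr_edge2P; split => //; exists C => //; rewrite aC bC.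
by rewrite h0 in_set0.
Qed.

Lemma vertices_unique G Q : admissible G Q -> restr_edges G Q = set0 -> Q = gV G.
Proof.
move=> hA h0; apply/setP => C; apply/idP/idP; first exact: edgeless_class_vertex.
move=> CV; case: (vertex_class hA CV) => D DQ CD.
by rewrite (vertex_sub_eq CV (edgeless_class_vertex hA h0 DQ) CD).
Qed.

Lemma restr_edges_vertices G : restr_edges G (gV G) = set0.
Proof.
apply/setP => e; rewrite in_set0; apply/negP => /restr_edgesP[eE [C CV h]].
case/edge_set2: eE => v [w [vV wV vw ee]]; move: h; rewrite ee => h.
have e1 := vertex_sub_eq vV CV (h v (set21 _ _)).
have e2 := vertex_sub_eq wV CV (h w (set22 _ _)).
by case/negP: vw; rewrite e1 e2.
Qed.

Lemma quot_vertices G : quot G (gV G) = G.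
Proof.
apply: graph_eq; first by rewrite gV_quot // gV_partition.
rewrite gE_quot ?gV_partition //; apply/setP => e; apply/idP/idP.
  case/quot_edgesP => C [D [v [w [CV DV CD [vwE vC wD ->]]]]].
  have [vV wV _] := edge_vertices vwE.
  by rewrite -(vertex_sub_eq vV CV vC) -(vertex_sub_eq wV DV wD).
move=> eE; case/edge_set2: (eE) => v [w [vV wV vw ee]].
by rewrite ee; apply: quot_edge2I vV wV vw _ (subxx _) (subxx _); rewrite -ee.
Qed.

Lemma card_restr_lt G Q : restr_edges G Q != gE G -> (#|gE (restr G Q)| < #|gE G|)%N.
Proof. by move=> h; rewrite gE_restr; apply: proper_card; rewrite properEneq h restr_edges_sub. Qed.

Lemma restr_edges_edgeless G Q : gE G = set0 -> restr_edges G Q = gE G.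
Proof. by move=> h; apply/eqP; rewrite eqEsubset restr_edges_sub h sub0set. Qed.

End Components.

Section Convolution.
Variables (K : fieldType) (T : finType).
Implicit Types (G : graph T) (Q : {set {set T}}) (l m : graph T -> K).

Definition starT l m G : K :=
  \sum_(Q : {set {set T}} | admissible G Q) l (quot G Q) * m (restr G Q).

Lemma starT_epsr l G : starT l (eps' K T) G = l G.
Proof.
rewrite /starT (bigD1 (gV G)) ?admissible_vertices //= big1 ?addr0.
  by rewrite /eps' gE_restr restr_edges_vertices eqxx mulr1 quot_vertices.
move=> Q /andP[hA nQ]; rewrite /eps' gE_restr.
case: eqP => [h0|]; last by rewrite mulr0.
by case/eqP: nQ; apply: vertices_unique.
Qed.

Lemma starT_epsl l G : starT (eps' K T) l G = l G.
Proof.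
rewrite /starT (bigD1 (components G)) ?admissible_components //= big1 ?addr0.
  rewrite /eps' quot_components_edgeless eqxx mul1r.
  by rewrite restr_id ?restr_edges_components.
move=> Q /andP[hA nQ]; rewrite /eps' gE_quot; last by case/admissibleP: hA.
case: eqP => [h0|]; last by rewrite mul0r.
by case/eqP: nQ; apply: components_unique => //; apply: full_of_quot_edges0.
Qed.

Lemma starT_components l m G : starT l m G = l (quot G (components G)) * m G +
  \sum_(Q | admissible G Q && (restr_edges G Q != gE G)) l (quot G Q) * m (restr G Q).
Proof.
rewrite /starT (bigD1 (components G)) ?admissible_components //=.
rewrite restr_id ?restr_edges_components //; congr (_ + _).
apply: eq_bigl => Q; case hA: (admissible G Q) => //=.
apply/idP/idP => h; apply/negP => /eqP h'; move/negP: h; apply.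
  by apply/eqP; apply: components_unique.
by rewrite h' restr_edges_components.
Qed.

Lemma starT_edgeless l m G : gE G = set0 -> starT l m G = l G * m G.
Proof.
move=> h0; rewrite starT_components big1 ?addr0.
  rewrite -[in components G](components_unique (admissible_vertices G)) ?quot_vertices //.
  exact: restr_edges_edgeless.
by move=> Q /andP[_]; rewrite restr_edges_edgeless // eqxx.
Qed.

(* In [starT l m G] only the term of [components G] evaluates [m] at [G] itself,
   the others at graphs with fewer edges (see [starT_components]); solving
   [starT l m G = eps' K T G] for [m G] gives the recursion, run with fuel
   [n > #|gE G|]. *)
Fixpoint rinv_rec l n G : K :=
  if n is n'.+1 then
    (eps' K T G - \sum_(Q | admissible G Q && (restr_edges G Q != gE G))
                l (quot G Q) * rinv_rec l n' (restr G Q)) / l (quot G (components G))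
  else 0.

Definition rinv l G : K := rinv_rec l (#|gE G|).+1 G.

Lemma rinv_rec_stable l (n k : nat) G : (#|gE G| < n)%N -> (#|gE G| < k)%N ->
  rinv_rec l n G = rinv_rec l k G.
Proof.
elim: n k G => [|n IH] [|k] G //= hn hm.
congr ((_ - _) / _); apply: eq_bigr => Q /andP[_ hQ]; congr (_ * _).
by apply: IH; apply: leq_trans (card_restr_lt hQ) _.
Qed.

Definition nz_edgeless l := forall H, gE H = set0 -> l H != 0.

Lemma starT_rinv l G : nz_edgeless l -> starT l (rinv l) G = eps' K T G.
Proof.
move=> nz; rewrite starT_components {1}/rinv /=.
have c0 : l (quot G (components G)) != 0 by apply/nz/quot_components_edgeless.
set S := (X in _ + X).
set S' := \sum_(Q | _) _ * rinv_rec _ _ _.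
have -> : S' = S.
  apply: eq_bigr => Q /andP[_ hQ]; congr (_ * _); rewrite /rinv.
  by apply: rinv_rec_stable => //; apply: card_restr_lt.
by rewrite mulrC divfK // subrK.
Qed.

Lemma rinv_edgeless_neq0 l H : nz_edgeless l -> gE H = set0 -> rinv l H != 0.
Proof.
move=> nz h0; have := starT_rinv H nz; rewrite starT_edgeless // /eps' h0 eqxx.
by move=> e; apply/eqP => r0; move: e; rewrite r0 mulr0 => /eqP; rewrite eq_sym oner_eq0.
Qed.

End Convolution.

Section Associativity.
Variable T : finType.
Implicit Types (G : graph T) (Q R : {set {set T}}).

Definition refines Q R := forall C, C \in Q -> exists2 D, D \in R & C \subset D.

Lemma adj_in_mono G (C D : {set T}) a b : C \subset D -> adj_in G C a b -> adj_in G D a b.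
Proof.
move=> CD /andP[/andP[e aC] bC]; rewrite /adj_in /= e.
by rewrite (subset_trans aC CD) (subset_trans bC CD).
Qed.

Lemma connected_connect_sub G (C D : {set T}) v w : induced_connected G C -> C \subset D ->
  v \in gV G -> w \in gV G -> v \subset C -> w \subset C -> connect (adj_in G D) v w.
Proof.
move=> icC CD vV wV vC wC; apply: connect_mono (connected_connect icC vV wV vC wC).
by move=> a b; apply: adj_in_mono.
Qed.

Lemma refines_sub G Q R v C D : admissible G Q -> partition R [set: T] -> refines Q R ->
  v \in gV G -> C \in Q -> D \in R -> v \subset C -> v \subset D -> C \subset D.
Proof.
move=> hQ hR ref vV CQ DR vC vD; case: (ref C CQ) => D' D'R CD'.
by rewrite (part_sub_eq_block hR (vertex_neq0 vV) DR D'R vD (subset_trans vC CD')).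
Qed.

Section QuotRestr.
Variables (G : graph T) (Q R : {set {set T}}).
Hypotheses (hQ : admissible G Q) (hR : partition R [set: T]) (ref : refines Q R).
Let hQp := admissible_partition hQ.

Lemma quot_quot : quot (quot G Q) R = quot G R.
Proof.
apply: graph_eq; first by rewrite !gV_quot.
rewrite !gE_quot //; apply/setP => e; apply/idP/idP.
  case/quot_edgesP => C [D [v [w [CR DR CD [vwE vC wD ->]]]]].
  move: vwE; rewrite gE_quot // => /quot_edge2_inv [vQ wQ _ [a [b [abE av bw]]]].
  by apply: quot_edge2I CR DR CD abE (subset_trans av vC) (subset_trans bw wD).
case/quot_edgesP => C [D [v [w [CR DR CD [vwE vC wD ->]]]]].
have [vV wV _] := edge_vertices vwE.
case: (vertex_class hQ vV) => C' C'Q vC'; case: (vertex_class hQ wV) => D' D'Q wD'.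
have C'C := refines_sub hQ hR ref vV C'Q CR vC' vC.
have D'D := refines_sub hQ hR ref wV D'Q DR wD' wD.
apply: (quot_edge2I CR DR CD _ C'C D'D); rewrite gE_quot //.
apply: (quot_edge2I C'Q D'Q _ vwE vC' wD').
apply/eqP => eCD; case/negP: CD; apply/eqP.
case: (part_block_neq0 hQp C'Q) => x xC'.
apply: (part_eq_block hR CR DR (subsetP C'C x xC')); rewrite eCD in xC'.
exact: (subsetP D'D x xC').
Qed.

Lemma restr_quot : restr (quot G Q) R = quot (restr G R) Q.
Proof.
apply: graph_eq; first by rewrite gV_restr !gV_quot.
rewrite gE_restr gE_quot //; apply/setP => e; apply/idP/idP.
  case/restr_edgesP; rewrite gE_quot // => /quot_edgesP.
  case=> C [C' [v [w [CQ C'Q CC' [vwE vC wC' ee]]]]].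
  case=> D DR h; rewrite ee in h *.
  apply: (quot_edge2I CQ C'Q CC' _ vC wC'); rewrite gE_restr; apply/restr_edge2P; split => //.
  exists D => //; rewrite (subset_trans vC (h _ (set21 _ _))).
  by rewrite (subset_trans wC' (h _ (set22 _ _))).
case/quot_edgesP => C [C' [v [w [CQ C'Q CC' [vwE vC wC' ->]]]]].
move: vwE; rewrite gE_restr => /restr_edge2P [vwE [D DR /andP[vD wD]]].
have [vV wV _] := edge_vertices vwE.
apply/restr_edge2P; split; first by rewrite gE_quot //; apply: (quot_edge2I CQ C'Q CC' vwE vC wC').
exists D => //; rewrite (refines_sub hQ hR ref vV CQ DR vC vD).
by rewrite (refines_sub hQ hR ref wV C'Q DR wC' wD).
Qed.

Lemma restr_restr : restr (restr G R) Q = restr G Q.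
Proof.
apply: graph_eq; first by rewrite !gV_restr.
rewrite !gE_restr; apply/setP => e; apply/idP/idP.
  case/restr_edgesP; rewrite gE_restr => /restr_edgesP [eE _] h; exact/restr_edgesP.
case/restr_edgesP => eE [C CQ h]; apply/restr_edgesP; split; last by exists C.
rewrite gE_restr; apply/restr_edgesP; split => //.
by case: (ref CQ) => D DR CD; exists D => // u ue; apply: subset_trans (h u ue) CD.
Qed.
End QuotRestr.

Lemma admissible_quot_refines G Q R :
  admissible (quot G Q) R -> partition Q [set: T] -> refines Q R.
Proof. by move=> hR hQ C CQ; case/admissibleP: hR => _ h _; apply: h; rewrite gV_quot. Qed.

Lemma connected_of_quot G Q R (D : {set T}) :
  admissible G Q -> partition R [set: T] -> refines Q R -> D \in R ->
  induced_connected (quot G Q) D -> induced_connected G D.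
Proof.
move=> hQ hR ref DR icD; have hQp := admissible_partition hQ.
apply/induced_connectedP => v w vV wV vD wD.
case: (vertex_class hQ vV) => Cv CvQ vCv; case: (vertex_class hQ wV) => Cw CwQ wCw.
have CvD := refines_sub hQ hR ref vV CvQ DR vCv vD.
have CwD := refines_sub hQ hR ref wV CwQ DR wCw wD.
have c : connect (adj_in (quot G Q) D) Cv Cw by apply: connected_connect; rewrite ?gV_quot.
pose P X := [/\ X \in Q, X \subset D &
  forall u, u \in gV G -> u \subset X -> connect (adj_in G D) v u].
suff [] : P Cw by move=> _ _; apply.
apply: (connect_ind (P := P)) c _ _.
  split => // u uV uCv.
  exact: connected_connect_sub (admissible_connected hQ CvQ) CvD vV uV vCv uCv.
move=> X X' [XQ XD h] /andP[/andP[e _] X'D]; move: e; rewrite gE_quot //.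
case/quot_edge2_inv => _ X'Q _ [a [b [abE aX bX']]].
have [aV bV _] := edge_vertices abE.
split => // u uV uX'.
have c1 : connect (adj_in G D) v a := h a aV aX.
have c2 : adj_in G D a b by rewrite /adj_in /= abE (subset_trans aX XD) (subset_trans bX' X'D).
have c3 : connect (adj_in G D) b u.
  exact: connected_connect_sub (admissible_connected hQ X'Q) X'D bV uV bX' uX'.
exact: connect_trans c1 (connect_trans (connect1 c2) c3).
Qed.

Lemma connected_restr G R (C D : {set T}) : induced_connected G C -> C \subset D -> D \in R ->
  induced_connected (restr G R) C.
Proof.
move=> icC CD DR; apply/induced_connectedP => v w; rewrite gV_restr => vV wV vC wC.
apply: connect_mono (connected_connect icC vV wV vC wC) => a b /andP[/andP[e aC] bC].
rewrite /adj_in /= aC bC gE_restr !andbT; apply/restr_edge2P; split => //.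
by exists D => //; rewrite (subset_trans aC CD) (subset_trans bC CD).
Qed.

Lemma admissible_restr_refines G Q R :
  admissible G R -> admissible (restr G R) Q -> refines Q R.
Proof.
move=> hR hQ C CQ; have hRp := admissible_partition hR.
case: (class_has_vertex hQ CQ) => v []; rewrite gV_restr => vV vC.
case: (vertex_class hR vV) => D DR vD; exists D => //.
apply/subsetP => x xC; case: (class_vertex hQ CQ xC) => w []; rewrite gV_restr => wV xw wC.
have c := connected_connect (admissible_connected hQ CQ) (v := v) (w := w); rewrite !gV_restr in c.
have {}c := c vV wV vC wC.
suff [] : w \in gV G /\ w \subset D by move=> _ /subsetP; apply.
apply: (connect_ind (P := fun u => u \in gV G /\ u \subset D)) c _ _ => //.
move=> u u' [uV uD] /andP[/andP[e _] _]; move: e; rewrite gE_restr.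
case/restr_edge2P => e [D' D'R /andP[uD' u'D']].
have [_ u'V _] := edge_vertices e.
by rewrite (part_sub_eq_block hRp (vertex_neq0 uV) DR D'R uD uD').
Qed.

Lemma connected_quot G Q R (D : {set T}) : admissible G Q -> partition R [set: T] -> refines Q R ->
  D \in R -> induced_connected G D -> induced_connected (quot G Q) D.
Proof.
move=> hQ hR ref DR icD; have hQp := admissible_partition hQ.
apply/induced_connectedP => X X'; rewrite gV_quot // => XQ X'Q XD X'D.
case: (class_has_vertex hQ XQ) => v [vV vX]; case: (class_has_vertex hQ X'Q) => w [wV wX'].
have c := connected_connect icD vV wV (subset_trans vX XD) (subset_trans wX' X'D).
pose P u := u \in gV G /\ forall Y, Y \in Q -> u \subset Y -> connect (adj_in (quot G Q) D) X Y.
suff [] : P w by move=> _; apply.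
apply: (connect_ind (P := P)) c _ _.
  split => // Y YQ vY.
  by rewrite (part_sub_eq_block hQp (vertex_neq0 vV) YQ XQ vY vX) connect0.
move=> u u' [uV h] /andP[/andP[e uD] u'D]; have [_ u'V _] := edge_vertices e.
split => // Y' Y'Q u'Y'; case: (vertex_class hQ uV) => Y YQ uY.
apply: connect_trans (h Y YQ uY) _.
have [->|YY'] := eqVneq Y Y'; first exact: connect0.
apply: connect1; rewrite /adj_in /= gE_quot // (quot_edge2I YQ Y'Q YY' e uY u'Y') /=.
by rewrite (refines_sub hQ hR ref uV YQ DR uY uD) (refines_sub hQ hR ref u'V Y'Q DR u'Y' u'D).
Qed.

Lemma admissible_quot_restr G Q R : admissible G Q -> admissible (quot G Q) R ->
  admissible G R /\ admissible (restr G R) Q.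
Proof.
move=> hQ hR'; have hQp := admissible_partition hQ.
have ref := admissible_quot_refines hR' hQp.
have hRp := admissible_partition hR'.
have hR : admissible G R.
  apply/admissibleP; split => //.
    move=> v vV; case: (vertex_class hQ vV) => C CQ vC; case: (ref C CQ) => D DR CD.
    by exists D => //; apply: subset_trans vC CD.
  by move=> D DR; apply: connected_of_quot hQ hRp ref DR (admissible_connected hR' DR).
split; first exact: hR.
apply/admissibleP; split => //.
  by move=> v; rewrite gV_restr; apply: vertex_class.
move=> C CQ; case: (ref C CQ) => D DR CD.
exact: (connected_restr (admissible_connected hQ CQ) CD DR).
Qed.

Lemma admissible_restr_quot G Q R : admissible G R -> admissible (restr G R) Q ->
  admissible G Q /\ admissible (quot G Q) R.
Proof.
move=> hR hQ'; have hRp := admissible_partition hR.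
have hQp := admissible_partition hQ'.
have hQ : admissible G Q.
  apply/admissibleP; split => //.
    by move=> v vV; apply: vertex_class hQ' _; rewrite gV_restr.
  move=> C CQ; apply/induced_connectedP => v w vV wV vC wC.
  have := connected_connect (admissible_connected hQ' CQ) (v := v) (w := w).
  rewrite !gV_restr => /(_ vV wV vC wC).
  apply: connect_mono => a b /andP[/andP[e aC] bC]; rewrite /adj_in /= aC bC !andbT.
  by move: e; rewrite gE_restr => /restr_edge2P[].
have ref := admissible_restr_refines hR hQ'.
split; first exact: hQ.
apply/admissibleP; split => //.
  by move=> C; rewrite gV_quot //; apply: ref.
by move=> D DR; apply: connected_quot hQ hRp ref DR (admissible_connected hR DR).
Qed.

Lemma admissible_quotE G Q R :
  (admissible G Q && admissible (quot G Q) R) = (admissible G R && admissible (restr G R) Q).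
Proof.
apply/idP/idP => /andP[h1 h2]; apply/andP.
  exact: admissible_quot_restr h1 h2.
exact: admissible_restr_quot h1 h2.
Qed.

Variable K : fieldType.

Lemma starT_assoc (l m n : graph T -> K) G :
  starT (starT l m) n G = starT l (starT m n) G.
Proof.
pose F Q R := l (quot G R) * m (quot (restr G R) Q) * n (restr G Q).
transitivity (\sum_Q \sum_R (if admissible G Q && admissible (quot G Q) R then F Q R else 0)).
  rewrite /starT big_mkcond; apply: eq_bigr => Q _.
  case hQ: (admissible G Q); last by rewrite big1.
  rewrite mulr_suml big_mkcond; apply: eq_bigr => R _ /=.
  case hR: (admissible (quot G Q) R); last by [].
  have hRp := admissible_partition hR.
  have ref := admissible_quot_refines hR (admissible_partition hQ).
  by rewrite /F quot_quot // restr_quot //.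
rewrite exchange_big /=; symmetry.
rewrite /starT big_mkcond; apply: eq_bigr => R _.
case hR: (admissible G R); last by rewrite big1 // => Q _; rewrite admissible_quotE hR.
rewrite mulr_sumr big_mkcond; apply: eq_bigr => Q _ /=.
rewrite admissible_quotE hR /=.
case hQ: (admissible (restr G R) Q); last by [].
have /andP[hQ' hR'] : admissible G Q && admissible (quot G Q) R by rewrite admissible_quotE hR hQ.
have hRp := admissible_partition hR.
have ref := admissible_quot_refines hR' (admissible_partition hQ').
by rewrite /F restr_restr // mulrA.
Qed.

End Associativity.

Lemma rinv_starT (K : fieldType) (T : finType) (l : graph T -> K) G : nz_edgeless l -> starT (rinv l) l G = eps' K T G.
Proof.
move=> nz; set m := rinv l.
have nzm : nz_edgeless m by move=> H h; apply: rinv_edgeless_neq0.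
set r := rinv m.
have lr : forall H, l H = r H.
  move=> H; rewrite -(starT_epsr l H).
  transitivity (starT l (starT m r) H).
    by apply: eq_bigr => Q _; rewrite starT_rinv.
  rewrite -starT_assoc; transitivity (starT (eps' K T) r H).
    by apply: eq_bigr => Q _; rewrite starT_rinv.
  by rewrite starT_epsl.
transitivity (starT m r G); first by apply: eq_bigr => Q _; rewrite lr.
by rewrite starT_rinv.
Qed.

Definition imV (T U : finType) (f : T -> U) (V : {set {set T}}) : {set {set U}} :=
  [set f @: B | B : {set T} in V].

Definition imE (T U : finType) (f : T -> U) (E : {set {set {set T}}}) : {set {set {set U}}} :=
  [set imV f e | e : {set {set T}} in E].

Section Images.
Variables (T U : finType) (f : T -> U).
Hypothesis inj : injective f.

Lemma imset_subE (A B : {set T}) : (f @: A \subset f @: B) = (A \subset B).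
Proof.
apply/idP/idP; last exact: imsetS.
move/subsetP => h; apply/subsetP => x xA.
by have := h (f x) (imset_f f xA); rewrite mem_imset.
Qed.

Lemma imV_inj : injective (imV f).
Proof. exact: imset_inj (imset_inj inj). Qed.

Lemma imV_set2 (a b : {set T}) : imV f [set a; b] = [set f @: a; f @: b].
Proof. by rewrite /imV imsetU !imset_set1. Qed.

Lemma mem_imE (E : {set {set {set T}}}) e : (imV f e \in imE f E) = (e \in E).
Proof. by rewrite /imE mem_imset //; exact: imV_inj. Qed.

End Images.

Lemma imset_preimset (T U : finType) (f : T -> U) (C : {set U}) :
  C \subset f @: setT -> f @: (f @^-1: C) = C.
Proof.
move=> h; apply/setP => z; apply/imsetP/idP.
  by case=> x; rewrite inE => xC ->.
move=> zC; case/imsetP: (subsetP h z zC) => x _ ezx.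
by exists x => //; rewrite inE -ezx.
Qed.

Definition split_of (T1 T2 U : finType) (f1 : T1 -> U) (f2 : T2 -> U) :=
  [/\ injective f1, injective f2, (forall x y, f1 x != f2 y) &
      forall u, (exists x, u = f1 x) \/ (exists y, u = f2 y)].

Lemma split_sym (T1 T2 U : finType) (f1 : T1 -> U) (f2 : T2 -> U) :
  split_of f1 f2 -> split_of f2 f1.
Proof.
case=> i1 i2 d c; split => // [x y|u]; first by rewrite eq_sym.
by case: (c u); [right|left].
Qed.

Definition part_union (T1 T2 U : finType) (f1 : T1 -> U) (f2 : T2 -> U)
  (Q1 : {set {set T1}}) (Q2 : {set {set T2}}) : {set {set U}} := imV f1 Q1 :|: imV f2 Q2.

Definition graph_union (T1 T2 U : finType) (f1 : T1 -> U) (f2 : T2 -> U)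
  (G1 : graph T1) (G2 : graph T2) (G : graph U) :=
  gV G = part_union f1 f2 (gV G1) (gV G2) /\ gE G = imE f1 (gE G1) :|: imE f2 (gE G2).

Lemma part_unionC (T1 T2 U : finType) (f1 : T1 -> U) (f2 : T2 -> U) Q1 Q2 :
  part_union f1 f2 Q1 Q2 = part_union f2 f1 Q2 Q1.
Proof. by rewrite /part_union setUC. Qed.

Lemma graph_unionC (T1 T2 U : finType) (f1 : T1 -> U) (f2 : T2 -> U) G1 G2 G :
  graph_union f1 f2 G1 G2 G -> graph_union f2 f1 G2 G1 G.
Proof. by case=> hV hE; split; rewrite ?hV ?hE 1?setUC // part_unionC. Qed.

Section SplitSide.
Variables (T1 T2 U : finType) (f1 : T1 -> U) (f2 : T2 -> U).
Hypothesis sp : split_of f1 f2.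

Lemma split_inj1 : injective f1. Proof. by case: sp. Qed.
Lemma split_inj2 : injective f2. Proof. by case: sp. Qed.
Lemma split_disj x y : f1 x != f2 y. Proof. by case: sp. Qed.
Lemma split_cover u : (exists x, u = f1 x) \/ (exists y, u = f2 y). Proof. by case: sp. Qed.

Lemma imset_split_neq (a : {set T1}) (b : {set T2}) x : x \in a -> f2 @: b != f1 @: a.
Proof.
move=> xa; apply/eqP => e.
have : f1 x \in f2 @: b by rewrite e imset_f.
by case/imsetP => y _ /eqP; rewrite (negbTE (split_disj _ _)).
Qed.

Lemma split_notin2 (b : {set T2}) x : f1 x \notin f2 @: b.
Proof. by apply/negP => /imsetP[y _ /eqP]; rewrite (negbTE (split_disj _ _)). Qed.

Lemma part_union_mem1 (Q1 : {set {set T1}}) (Q2 : {set {set T2}}) (C : {set U}) x :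
  C \in part_union f1 f2 Q1 Q2 -> f1 x \in C ->
  exists2 C1, C1 \in Q1 & C = f1 @: C1 /\ x \in C1.
Proof.
case/setUP => /imsetP[C' C'Q ->] xC.
  by exists C' => //; split => //; rewrite mem_imset // in xC; exact: split_inj1.
by rewrite (negbTE (split_notin2 _ _)) in xC.
Qed.

Lemma part_union_sub1 (Q1 : {set {set T1}}) (Q2 : {set {set T2}}) (C : {set U})
    (a : {set T1}) : C \in part_union f1 f2 Q1 Q2 ->
  (exists x, x \in a) -> f1 @: a \subset C ->
  exists2 C1, C1 \in Q1 & C = f1 @: C1 /\ a \subset C1.
Proof.
move=> CU [x xa] aC.
case: (part_union_mem1 CU (subsetP aC _ (imset_f f1 xa))) => C1 C1Q [eC _].
by exists C1 => //; split => //; rewrite -(imset_subE split_inj1) -eC.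
Qed.

Lemma part_union_partition1 (Q1 : {set {set T1}}) (Q2 : {set {set T2}}) :
  partition (part_union f1 f2 Q1 Q2) [set: U] -> partition Q1 [set: T1].
Proof.
case/partition_setTP => n0 c u; apply/partition_setTP; split.
- apply/negP => h0; case/negP: n0; apply/setUP; left.
  by rewrite -(imset0 f1); apply: imset_f.
- move=> x; case: (c (f1 x)) => C CU xC.
  by case: (part_union_mem1 CU xC) => C1 C1Q [_ xC1]; exists C1.
move=> x B B' BQ B'Q xB xB'.
have h1 : f1 @: B \in part_union f1 f2 Q1 Q2 by rewrite inE imset_f.
have h2 : f1 @: B' \in part_union f1 f2 Q1 Q2 by rewrite inE imset_f.
apply: (imset_inj split_inj1); exact: (u (f1 x) _ _ h1 h2 (imset_f f1 xB) (imset_f f1 xB')).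
Qed.

Lemma part_union_blocks1 (Q1 : {set {set T1}}) (Q2 : {set {set T2}}) :
  set0 \notin Q2 -> Q1 = [set C1 : {set T1} | f1 @: C1 \in part_union f1 f2 Q1 Q2].
Proof.
move=> n0; apply/setP => C1; rewrite inE; apply/idP/idP.
  by move=> h; rewrite inE imset_f.
case/setUP => /imsetP[C' C'Q e].
  by rewrite (imset_inj split_inj1 e).
have : C' != set0.
  by apply/negP => /eqP h; move: n0; rewrite -h C'Q.
case/set0Pn => y yC'.
have : f2 y \in f1 @: C1 by rewrite e imset_f.
case/imsetP => x _ /eqP hxy.
by move: (split_disj x y); rewrite eq_sym hxy.
Qed.

End SplitSide.

Section SplitPartitions.
Variables (T1 T2 U : finType) (f1 : T1 -> U) (f2 : T2 -> U).
Hypothesis sp : split_of f1 f2.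

Lemma part_union_partition (Q1 : {set {set T1}}) (Q2 : {set {set T2}}) :
  partition Q1 [set: T1] -> partition Q2 [set: T2] ->
  partition (part_union f1 f2 Q1 Q2) [set: U].
Proof.
move=> /partition_setTP[n1 c1 u1] /partition_setTP[n2 c2 u2]; apply/partition_setTP; split.
- apply/negP => /setUP[] /imsetP[C CQ /esym/eqP]; rewrite imset_eq0 => /eqP C0.
    by rewrite -C0 CQ in n1.
  by rewrite -C0 CQ in n2.
- move=> u; case: (split_cover sp u) => [[x ->]|[y ->]].
    by case: (c1 x) => C CQ xC; exists (f1 @: C); rewrite ?inE ?imset_f.
  by case: (c2 y) => C CQ yC; exists (f2 @: C); rewrite ?inE ?imset_f ?orbT.
move=> u B B' BU B'U uB uB'.
case: (split_cover sp u) => [[x ex]|[y ey]]; subst u.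
  case: (part_union_mem1 sp BU uB) => C C1 [-> xC].
  case: (part_union_mem1 sp B'U uB') => C' C'1 [-> xC'].
  by rewrite (u1 x C C').
rewrite part_unionC in BU B'U.
case: (part_union_mem1 (split_sym sp) BU uB) => C C1 [-> xC].
case: (part_union_mem1 (split_sym sp) B'U uB') => C' C'1 [-> xC'].
by rewrite (u2 y C C').
Qed.

Lemma part_union_inj (Q1 Q1' : {set {set T1}}) (Q2 Q2' : {set {set T2}}) :
  set0 \notin Q1 -> set0 \notin Q2 -> set0 \notin Q1' -> set0 \notin Q2' ->
  part_union f1 f2 Q1 Q2 = part_union f1 f2 Q1' Q2' -> Q1 = Q1' /\ Q2 = Q2'.
Proof.
move=> n1 n2 n1' n2' e; split.
  by rewrite (part_union_blocks1 sp Q1 n2) (part_union_blocks1 sp Q1' n2') e.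
rewrite (part_union_blocks1 (split_sym sp) Q2 n1) (part_union_blocks1 (split_sym sp) Q2' n1').
by rewrite -(part_unionC f1 f2 Q1 Q2) -(part_unionC f1 f2 Q1' Q2') e.
Qed.

End SplitPartitions.

Section UnionSide.
Variables (T1 T2 U : finType) (f1 : T1 -> U) (f2 : T2 -> U).
Hypothesis sp : split_of f1 f2.
Variables (G1 : graph T1) (G2 : graph T2) (G : graph U).
Hypothesis hU : graph_union f1 f2 G1 G2 G.

Let inj1 := split_inj1 sp.

Lemma union_vertex1 v : v \in gV G1 -> f1 @: v \in gV G.
Proof. by move=> vV; case: hU => -> _; rewrite inE imset_f. Qed.

Lemma union_edge1 e : e \in gE G1 -> imV f1 e \in gE G.
Proof. by move=> eE; case: hU => _ ->; rewrite inE /imE imset_f. Qed.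

Lemma union_edge2_1 (a b : {set T1}) : [set a; b] \in gE G1 -> [set f1 @: a; f1 @: b] \in gE G.
Proof. by move=> e; rewrite -imV_set2; apply: union_edge1. Qed.

Lemma union_vertex_mem1 u x : u \in gV G -> f1 x \in u ->
  exists2 v, v \in gV G1 & u = f1 @: v /\ x \in v.
Proof. by case: hU => hV _; rewrite hV => uV xu; apply: (part_union_mem1 sp uV xu). Qed.

Lemma union_vertex_sub1 u (C1 : {set T1}) : u \in gV G -> u \subset f1 @: C1 ->
  exists2 v, v \in gV G1 & u = f1 @: v /\ v \subset C1.
Proof.
move=> uV uC; case: (vertex_neq0 uV) => z zu.
case/imsetP: (subsetP uC z zu) => x _ ezx; rewrite ezx in zu.
case: (union_vertex_mem1 uV zu) => v vV [ev _]; exists v => //; split => //.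
by rewrite -(imset_subE inj1) -ev.
Qed.

Lemma union_edge_side1 e (a : {set T1}) x : e \in gE G -> x \in a -> f1 @: a \in e ->
  exists2 e1, e1 \in gE G1 & e = imV f1 e1.
Proof.
case: hU => _ ->; case/setUP => /imsetP[e' e'E ->] xa ae; first by exists e'.
case/imsetP: ae => b _ eab.
by move: (imset_split_neq sp b xa); rewrite eab eqxx.
Qed.

Lemma union_edge_inv1 (a : {set T1}) (w : {set U}) : a \in gV G1 -> [set f1 @: a; w] \in gE G ->
  exists b : {set T1}, w = f1 @: b /\ [set a; b] \in gE G1.
Proof.
move=> aV e; case: (vertex_neq0 aV) => x xa.
case: (union_edge_side1 e xa (set21 _ _)) => e1 e1E ee.
case/edge_set2: (e1E) => p [q [pV qV pq ee1]].
have ew : w \in imV f1 e1 by rewrite -ee set22.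
rewrite ee1 imV_set2 in ew.
have [b [ewb bpq]] : exists b : {set T1}, w = f1 @: b /\ b \in [set p; q].
  by case/set2P: ew => ->; [exists p | exists q]; rewrite !inE eqxx ?orbT.
exists b; split => //.
suff -> : [set a; b] = e1 by [].
by apply: (imV_inj inj1); rewrite -ee ewb imV_set2.
Qed.

Lemma connected_union1 (C1 : {set T1}) : induced_connected G1 C1 -> induced_connected G (f1 @: C1).
Proof.
move=> ic; apply/induced_connectedP => u u' uV u'V uC u'C.
case: (union_vertex_sub1 uV uC) => v vV [-> vC].
case: (union_vertex_sub1 u'V u'C) => v' v'V [-> v'C].
have c := connected_connect ic vV v'V vC v'C.
pose P (a : {set T1}) := connect (adj_in G (f1 @: C1)) (f1 @: v) (f1 @: a).
change (P v'); apply: (connect_ind (P := P)) c _ _.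
  exact: connect0.
move=> a b ca /andP[/andP[e aC] bC]; apply: connect_trans ca (connect1 _).
by rewrite /adj_in /= (union_edge2_1 e) !(imset_subE inj1) aC bC.
Qed.

Lemma connected_of_union1 (C1 : {set T1}) :
  induced_connected G (f1 @: C1) -> induced_connected G1 C1.
Proof.
move=> ic; apply/induced_connectedP => v v' vV v'V vC v'C.
have c := connected_connect ic (union_vertex1 vV) (union_vertex1 v'V)
  (imsetS f1 vC) (imsetS f1 v'C).
pose P (a : {set U}) := exists b : {set T1},
  [/\ a = f1 @: b, b \in gV G1 & connect (adj_in G1 C1) v b].
suff [b [eb bV cb]] : P (f1 @: v') by rewrite (imset_inj inj1 eb).
apply: (connect_ind (P := P)) c _ _.
  by exists v; split => //; apply: connect0.
move=> a a' [b [-> bV cb]] /andP[/andP[e aC] a'C].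
case: (union_edge_inv1 bV e) => b' [eb' e1]; have [_ b'V _] := edge_vertices e1.
exists b'; split => //; apply: connect_trans cb (connect1 _).
by rewrite /adj_in /= e1 -(imset_subE inj1) aC -(imset_subE inj1) -eb' a'C.
Qed.

Lemma union_class_side1 Q (C : {set U}) v : admissible G Q -> C \in Q -> v \in gV G1 ->
  f1 @: v \subset C -> C \subset f1 @: setT.
Proof.
move=> hA CQ vV vC; apply/subsetP => z zC.
case: (class_vertex hA CQ zC) => u [uV zu uC].
have c := connected_connect (admissible_connected hA CQ) (union_vertex1 vV) uV vC uC.
pose P (a : {set U}) := exists2 b : {set T1}, b \in gV G1 & a = f1 @: b.
suff [b _ eb] : P u by move: zu; rewrite eb; apply/subsetP/imsetS/subsetT.
apply: (connect_ind (P := P)) c _ _; first by exists v.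
move=> a a' [b bV ->] /andP[/andP[e _] _].
case: (union_edge_inv1 bV e) => b' [-> e1]; have [_ b'V _] := edge_vertices e1.
by exists b'.
Qed.

Lemma quot_edges_union1 (Q1 : {set {set T1}}) (Q2 : {set {set T2}}) e1 :
  e1 \in quot_edges G1 Q1 -> imV f1 e1 \in quot_edges G (part_union f1 f2 Q1 Q2).
Proof.
case/quot_edgesP => C [D [v [w [CQ DQ CD [vwE vC wD ->]]]]].
rewrite imV_set2; apply: (quot_edge2I _ _ _ (union_edge2_1 vwE)); rewrite ?imsetS //.
- by rewrite inE imset_f.
- by rewrite inE imset_f.
by apply/negP => /eqP /(imset_inj inj1) /eqP; apply/negP.
Qed.

Lemma quot_edges_of_union1 (Q1 : {set {set T1}}) (Q2 : {set {set T2}}) (C D : {set U}) a w :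
  C \in part_union f1 f2 Q1 Q2 -> D \in part_union f1 f2 Q1 Q2 -> C != D -> a \in gV G1 ->
  [set f1 @: a; w] \in gE G -> f1 @: a \subset C -> w \subset D ->
  [set C; D] \in imE f1 (quot_edges G1 Q1).
Proof.
move=> CU DU CD aV e aC wD.
case: (union_edge_inv1 aV e) => b [ewb e1]; have [_ bV _] := edge_vertices e1.
case: (part_union_sub1 sp CU (vertex_neq0 aV) aC) => C1 C1Q [eC aC1].
rewrite ewb in wD.
case: (part_union_sub1 sp DU (vertex_neq0 bV) wD) => D1 D1Q [eD bD1].
rewrite eC eD -(imV_set2 f1) (mem_imE inj1).
apply: (quot_edge2I C1Q D1Q _ e1 aC1 bD1).
by apply/negP => /eqP e'; move: CD; rewrite eC eD e' eqxx.
Qed.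

Lemma restr_edges_union1 (Q1 : {set {set T1}}) (Q2 : {set {set T2}}) e1 :
  e1 \in restr_edges G1 Q1 -> imV f1 e1 \in restr_edges G (part_union f1 f2 Q1 Q2).
Proof.
case/restr_edgesP => e1E [C1 C1Q h]; apply/restr_edgesP; split; first exact: union_edge1.
exists (f1 @: C1); first by rewrite inE imset_f.
by move=> u /imsetP[u1 u1e ->]; rewrite imset_subE // h.
Qed.

Lemma restr_edges_of_union1 (Q1 : {set {set T1}}) (Q2 : {set {set T2}}) e1 : e1 \in gE G1 ->
  imV f1 e1 \in restr_edges G (part_union f1 f2 Q1 Q2) -> e1 \in restr_edges G1 Q1.
Proof.
move=> e1E /restr_edgesP[_ [C CU h]]; apply/restr_edgesP; split => //.
case/edge_set2: (e1E) => a [b [aV _ _ ee]].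
have aC : f1 @: a \subset C by apply: h; rewrite ee imV_set2 set21.
case: (part_union_sub1 sp CU (vertex_neq0 aV) aC) => C1 C1Q [eC _].
exists C1 => // u1 u1e; rewrite -(imset_subE inj1) -eC; apply: h; exact: imset_f.
Qed.

Lemma admissible_of_union1 Q (Q1 : {set {set T1}}) (Q2 : {set {set T2}}) : admissible G Q ->
  Q = part_union f1 f2 Q1 Q2 -> admissible G1 Q1.
Proof.
move=> hA eQ; apply/admissibleP; split.
- by apply: (part_union_partition1 sp (Q2 := Q2)); rewrite -eQ; apply: admissible_partition hA.
- move=> v vV; case: (vertex_class hA (union_vertex1 vV)) => C CQ vC.
  rewrite eQ in CQ; case: (part_union_sub1 sp CQ (vertex_neq0 vV) vC) => C1 C1Q [_ vC1].
  by exists C1.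
move=> C1 C1Q; apply/connected_of_union1/(admissible_connected hA).
by rewrite eQ inE imset_f.
Qed.

End UnionSide.

Section Union.
Variables (T1 T2 U : finType) (f1 : T1 -> U) (f2 : T2 -> U).
Hypothesis sp : split_of f1 f2.
Variables (G1 : graph T1) (G2 : graph T2) (G : graph U).
Hypothesis hU : graph_union f1 f2 G1 G2 G.

Let sp' := split_sym sp.
Let hU' := graph_unionC hU.

Lemma admissible_union (Q1 : {set {set T1}}) (Q2 : {set {set T2}}) :
  admissible G1 Q1 -> admissible G2 Q2 -> admissible G (part_union f1 f2 Q1 Q2).
Proof.
move=> h1 h2; apply/admissibleP; split.
- by have := part_union_partition sp (admissible_partition h1) (admissible_partition h2).
- move=> u; case: (hU) => -> _; case/setUP => /imsetP[v vV ->].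
    by case: (vertex_class h1 vV) => C CQ vC; exists (f1 @: C); rewrite ?inE ?imset_f ?imsetS.
  by case: (vertex_class h2 vV) => C CQ vC; exists (f2 @: C); rewrite ?inE ?imset_f ?imsetS ?orbT.
move=> C; case/setUP => /imsetP[C1 C1Q ->].
  exact: (connected_union1 sp hU (admissible_connected h1 C1Q)).
exact: (connected_union1 sp' hU' (admissible_connected h2 C1Q)).
Qed.

Lemma admissible_union_inv Q : admissible G Q -> exists Q1, exists Q2,
  [/\ admissible G1 Q1, admissible G2 Q2 & Q = part_union f1 f2 Q1 Q2].
Proof.
move=> hA.
pose Q1 := [set C1 : {set T1} | f1 @: C1 \in Q].
pose Q2 := [set C2 : {set T2} | f2 @: C2 \in Q].
have eQ : Q = part_union f1 f2 Q1 Q2.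
  apply/setP => C; apply/idP/idP.
    move=> CQ; case: (class_has_vertex hA CQ) => u [uV uC].
    move: (uV); case: (hU) => -> _; case/setUP => /imsetP[v vV ev]; rewrite ev in uC.
      have := union_class_side1 sp hU hA CQ vV uC => /imset_preimset eC.
      by rewrite inE -eC imset_f // inE eC.
    have := union_class_side1 sp' hU' hA CQ vV uC => /imset_preimset eC.
    by rewrite inE -eC imset_f ?orbT // inE eC.
  by case/setUP => /imsetP[C1]; rewrite inE => h ->.
exists Q1, Q2; split => //.
  exact: (admissible_of_union1 sp hU hA eQ).
by apply: (admissible_of_union1 sp' hU' hA); rewrite eQ part_unionC.
Qed.

Lemma graph_union_quot (Q1 : {set {set T1}}) (Q2 : {set {set T2}}) :
  admissible G1 Q1 -> admissible G2 Q2 ->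
  graph_union f1 f2 (quot G1 Q1) (quot G2 Q2) (quot G (part_union f1 f2 Q1 Q2)).
Proof.
move=> h1 h2; have p1 := admissible_partition h1; have p2 := admissible_partition h2.
have pU := part_union_partition sp p1 p2.
split; first by rewrite !gV_quot.
rewrite !gE_quot //; apply/setP => e; apply/idP/idP.
  case/quot_edgesP => C [D [v [w [CQ DQ CD [vwE vC wD ->]]]]].
  have [vV _ _] := edge_vertices vwE.
  move: vV; case: (hU) => -> _; case/setUP => /imsetP[a aV ea]; rewrite ea in vwE vC.
    by rewrite inE (quot_edges_of_union1 sp hU CQ DQ CD aV vwE vC wD).
  rewrite part_unionC in CQ DQ.
  by rewrite inE (quot_edges_of_union1 sp' hU' CQ DQ CD aV vwE vC wD) orbT.
case/setUP => /imsetP[e1 e1E ->].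
  exact: (quot_edges_union1 sp hU Q2 e1E).
rewrite part_unionC; exact: (quot_edges_union1 sp' hU' Q1 e1E).
Qed.

Lemma graph_union_restr (Q1 : {set {set T1}}) (Q2 : {set {set T2}}) :
  graph_union f1 f2 (restr G1 Q1) (restr G2 Q2) (restr G (part_union f1 f2 Q1 Q2)).
Proof.
split; first by rewrite !gV_restr; case: hU.
rewrite !gE_restr; apply/setP => e; apply/idP/idP.
  move=> eR; have := subsetP (restr_edges_sub _ _) e eR; case: (hU) => _ ->.
  case/setUP => /imsetP[e1 e1E ee]; rewrite ee in eR *.
    by apply/setUP; left; rewrite (mem_imE (split_inj1 sp)) (restr_edges_of_union1 sp e1E eR).
  rewrite part_unionC in eR.
  by apply/setUP; right; rewrite (mem_imE (split_inj2 sp)) (restr_edges_of_union1 sp' e1E eR).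
case/setUP => /imsetP[e1 e1E ->].
  exact: (restr_edges_union1 sp hU Q2 e1E).
rewrite part_unionC; exact: (restr_edges_union1 sp' hU' Q1 e1E).
Qed.

Lemma card_edges_union : #|gE G| = (#|gE G1| + #|gE G2|)%N.
Proof.
case: (hU) => _ ->; rewrite cardsU.
have -> : imE f1 (gE G1) :&: imE f2 (gE G2) = set0.
  apply/setP => e; rewrite !inE; apply/negP => /andP[/imsetP[e1 e1E ->] /imsetP[e2 e2E ee]].
  case/edge_set2: e1E => a [b [aV _ _ ea]]; case: (vertex_neq0 aV) => x xa.
  have : f1 @: a \in imV f2 e2 by rewrite -ee ea imV_set2 set21.
  by case/imsetP => c _ ec; move: (imset_split_neq sp c xa); rewrite ec eqxx.
rewrite cards0 subn0 !card_imset //; apply: imV_inj.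
  exact: (split_inj2 sp).
exact: (split_inj1 sp).
Qed.

Lemma eps'_union (K : fieldType) : eps' K U G = eps' K T1 G1 * eps' K T2 G2.
Proof.
rewrite /eps' -!cards_eq0 card_edges_union addn_eq0.
by case: (_ == 0)%N; case: (_ == 0)%N; rewrite ?mulr1 ?mul0r ?mulr0.
Qed.

End Union.

Lemma imV_comp (T T' U : finType) (f : T -> T') (g : T' -> U) V :
  imV g (imV f V) = imV (g \o f) V.
Proof.
rewrite /imV -imset_comp; apply: eq_imset => B /=; by rewrite imset_comp.
Qed.

Lemma imE_comp (T T' U : finType) (f : T -> T') (g : T' -> U) E :
  imE g (imE f E) = imE (g \o f) E.
Proof.
rewrite /imE -imset_comp; apply: eq_imset => e /=; by rewrite imV_comp.
Qed.

Lemma split_sum (T1 T2 : finType) : split_of (@inl T1 T2) (@inr T1 T2).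
Proof.
split => //; [exact: inl_inj | exact: inr_inj |].
by case=> [x|y]; [left; exists x | right; exists y].
Qed.

Section UnionGraph.
Variables (T1 T2 U : finType) (f1 : T1 -> U) (f2 : T2 -> U).
Hypothesis sp : split_of f1 f2.

Lemma is_graph_union (G1 : graph T1) (G2 : graph T2) :
  is_graph (part_union f1 f2 (gV G1) (gV G2), imE f1 (gE G1) :|: imE f2 (gE G2)).
Proof.
apply/andP; split; first by have := part_union_partition sp (gV_partition G1) (gV_partition G2).
apply/forall_inP => e /=; case/setUP => /imsetP[e1 e1E ->];
  case/edge_set2: e1E => a [b [aV bV ab ->]]; rewrite imV_set2 cards2.
  rewrite (inj_eq (imset_inj (split_inj1 sp))) ab andbT.
  by apply/subsetP => u /set2P[] ->; rewrite inE imset_f.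
rewrite (inj_eq (imset_inj (split_inj2 sp))) ab andbT.
by apply/subsetP => u /set2P[] ->; rewrite inE imset_f ?orbT.
Qed.

Definition union_graph (G1 : graph T1) (G2 : graph T2) : graph U :=
  exist (fun g : rawgraph U => is_graph g) _ (is_graph_union G1 G2).

Lemma card_part_union (V1 : {set {set T1}}) (V2 : {set {set T2}}) :
  set0 \notin V1 -> #|part_union f1 f2 V1 V2| = (#|V1| + #|V2|)%N.
Proof.
move=> n1; rewrite /part_union cardsU.
have -> : imV f1 V1 :&: imV f2 V2 = set0.
  apply/setP => C; rewrite !inE; apply/negP => /andP[/imsetP[C1 C1V ->] /imsetP[C2 _ e]].
  have : C1 != set0 by apply/negP => /eqP h; move: n1; rewrite -h C1V.
  by case/set0Pn => x xC; move: (imset_split_neq sp C2 xC); rewrite e eqxx.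
rewrite cards0 subn0 /imV !card_imset //; apply: imset_inj.
  exact: (split_inj2 sp).
exact: (split_inj1 sp).
Qed.

Variables (G1 : graph T1) (G2 : graph T2) (G : graph U).
Hypothesis hU : graph_union f1 f2 G1 G2 G.

Lemma big_admissible_union (K : fieldType) (F : {set {set U}} -> K) :
  \sum_(Q | admissible G Q) F Q =
  \sum_(Q1 | admissible G1 Q1) \sum_(Q2 | admissible G2 Q2) F (part_union f1 f2 Q1 Q2).
Proof.
rewrite pair_big_dep /=.
pose A := [set p : {set {set T1}} * {set {set T2}} | admissible G1 p.1 && admissible G2 p.2].
pose h (p : {set {set T1}} * {set {set T2}}) := part_union f1 f2 p.1 p.2.
have hinj : {in A &, injective h}.
  move=> [Q1 Q2] [Q1' Q2']; rewrite !inE /= => /andP[a1 a2] /andP[a1' a2'] e.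
  have [n1 n2] := (admissible_set0 a1, admissible_set0 a2).
  have [n1' n2'] := (admissible_set0 a1', admissible_set0 a2').
  by case: (part_union_inj sp n1 n2 n1' n2' e) => -> ->.
transitivity (\sum_(Q in h @: A) F Q).
  apply: eq_bigl => Q; apply/idP/idP.
    case/(admissible_union_inv sp hU) => Q1 [Q2 [a1 a2 ->]].
    by apply/imsetP; exists (Q1, Q2) => //; rewrite inE a1 a2.
  case/imsetP => [[Q1 Q2]]; rewrite inE /= => /andP[a1 a2] ->.
  exact: (admissible_union sp hU a1 a2).
rewrite big_imset //; apply: eq_bigl => p; by rewrite inE.
Qed.

End UnionGraph.

Definition split_sum_map (T1 T2 U : finType) (f1 : T1 -> U) (f2 : T2 -> U) (s : T1 + T2) : U :=
  match s with inl x => f1 x | inr y => f2 y end.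

Lemma split_sum_map_bij (T1 T2 U : finType) (f1 : T1 -> U) (f2 : T2 -> U) :
  split_of f1 f2 -> bijective (split_sum_map f1 f2).
Proof.
move=> sp; have hinj : injective (split_sum_map f1 f2).
  case=> [x|y] [x'|y'] /= e.
  - by rewrite (split_inj1 sp e).
  - by move: (split_disj sp x y'); rewrite e eqxx.
  - by move: (split_disj sp x' y); rewrite e eqxx.
  - by rewrite (split_inj2 sp e).
apply: (inj_card_bij hinj).
have e : split_sum_map f1 f2 @: [set: T1 + T2] = [set: U].
  apply/setP => u; rewrite inE; apply/imsetP.
  by case: (split_cover sp u) => [[x ->]|[y ->]]; [exists (inl x) | exists (inr y)].
by rewrite -cardsT -e; apply: leq_trans (leq_imset_card _ _) _; rewrite cardsT.
Qed.

Section CharacterUnion.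
Local Unset Implicit Arguments.
Variables (K : fieldType) (lam : gfamily K).
Hypothesis lam_char : is_character lam.
Local Set Implicit Arguments.

Lemma character_bij : bij_invariant lam. Proof. by case: lam_char. Qed.
Lemma character_mult : Defs.multiplicative lam. Proof. by case: lam_char. Qed.
Lemma character_unital : unital lam. Proof. by case: lam_char. Qed.

Lemma character_union (T1 T2 U : finType) (f1 : T1 -> U) (f2 : T2 -> U) (sp : split_of f1 f2)
  G1 G2 G : graph_union f1 f2 G1 G2 G -> lam U G = lam T1 G1 * lam T2 G2.
Proof.
move=> [hV hE]; pose H := union_graph (split_sum T1 T2) G1 G2.
rewrite -(@character_mult _ _ G1 G2 H) //.
apply: (character_bij (split_sum_map_bij sp)).
  change (gV G = imV (split_sum_map f1 f2) (part_union inl inr (gV G1) (gV G2))).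
  by rewrite hV /part_union /imV imsetU -!/(imV _ _) !imV_comp.
change (gE G = imE (split_sum_map f1 f2) (imE inl (gE G1) :|: imE inr (gE G2))).
by rewrite hE /imE imsetU -!/(imE _ _) !imE_comp.
Qed.

End CharacterUnion.

Lemma is_graph_discrete (T : finType) (P : {set {set T}}) :
  partition P [set: T] -> is_graph (P, set0).
Proof. by move=> hP; apply/andP; split => //; apply/forall_inP => e; rewrite in_set0. Qed.

Definition discrete_graph (T : finType) (P : {set {set T}}) (hP : partition P [set: T]) : graph T :=
  exist (fun g : rawgraph T => is_graph g) _ (is_graph_discrete hP).

Lemma edgeless_graph_union (T1 T2 U : finType) (f1 : T1 -> U) (f2 : T2 -> U)
    (P1 : {set {set T1}}) (P2 : {set {set T2}})
    (p1 : partition P1 [set: T1]) (p2 : partition P2 [set: T2]) (G : graph U) :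
  gV G = part_union f1 f2 P1 P2 -> gE G = set0 ->
  graph_union f1 f2 (discrete_graph p1) (discrete_graph p2) G.
Proof. by move=> hV h0; split; rewrite // h0 /gE /= /imE !imset0 setU0. Qed.

Lemma card_vertices0 (T : finType) (G : graph T) : gV G = set0 -> #|T| = 0%N.
Proof.
move=> h; apply: eq_card0 => x /=; case: (part_cover x (gV_partition G)) => B.
by rewrite h in_set0.
Qed.

Lemma split_block (T : finType) (B : {set T}) :
  split_of (val : {x : T | x \in B} -> T) (val : {x : T | x \notin B} -> T).
Proof.
split.
- exact: val_inj.
- exact: val_inj.
- move=> [x xB] [y yB] /=; apply/eqP => e; move: yB; by rewrite -e xB.
move=> u; case uB: (u \in B).
  by left; exists (exist _ u uB).
have uB' : u \notin B by rewrite uB.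
by right; exists (exist _ u uB').
Qed.

Lemma val_setT_block (T : finType) (B : {set T}) :
  [set val y | y in [set: {x : T | x \in B}]] = B.
Proof.
apply/setP => x; apply/imsetP/idP => [[y _ ->] | xB]; first exact: valP.
by exists (exist _ x xB).
Qed.

Section VertexSplit.
Variables (T : finType) (G : graph T) (B : {set T}).
Hypothesis BV : B \in gV G.

Definition block_vertices : {set {set {x : T | x \in B}}} :=
  [set C : {set {x : T | x \in B}} | [set val y | y in C] \in gV G].
Definition other_vertices : {set {set {x : T | x \notin B}}} :=
  [set C : {set {x : T | x \notin B}} | [set val y | y in C] \in gV G].

Lemma gV_split_block : gV G = part_union val val block_vertices other_vertices.
Proof.
apply/setP => C; apply/idP/idP; last first.
  by case/setUP => /imsetP[C1]; rewrite inE => h ->.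
move=> CV; apply/setUP; have [-> | nCB] := eqVneq C B.
  by left; apply/imsetP; exists setT; rewrite ?inE val_setT_block.
have Csub : C \subset [set val y | y in [set: {x : T | x \notin B}]].
  apply/subsetP => y yC; have yB : y \notin B.
    by apply/negP => yB; case/eqP: nCB; apply: part_eq_block (gV_partition G) CV BV yC yB.
  by apply/imsetP; exists (exist _ y yB).
by right; apply/imsetP; exists (val @^-1: C); rewrite ?inE imset_preimset.
Qed.

Lemma block_vertices_single : block_vertices = [set [set: {x : T | x \in B}]].
Proof.
apply/setP => C1; rewrite !inE; apply/idP/eqP => [C1V | ->]; last by rewrite val_setT_block.
have [[z zB] zC1] : exists z, z \in C1.
  have n0 : set0 \notin gV G by case/and3P: (gV_partition G).
  by apply/set0Pn/eqP => C10; move: C1V n0; rewrite C10 imset0 => ->.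
have eB : [set val y | y in C1] = B.
  by apply: part_eq_block (gV_partition G) C1V BV (imset_f _ zC1) zB.
apply/setP => y; rewrite inE -(mem_imset _ _ val_inj) eB; exact: valP.
Qed.

Lemma partition_block_vertices : partition block_vertices [set: {x : T | x \in B}].
Proof.
have := gV_partition G; rewrite gV_split_block => pU.
exact: (part_union_partition1 (split_block B) pU).
Qed.

Lemma partition_other_vertices : partition other_vertices [set: {x : T | x \notin B}].
Proof.
have := gV_partition G; rewrite gV_split_block part_unionC => pU.
exact: (part_union_partition1 (split_sym (split_block B)) pU).
Qed.

Lemma card_other_vertices : #|gV G| = #|other_vertices|.+1.
Proof.
rewrite gV_split_block card_part_union ?block_vertices_single ?cards1 //.
  exact: split_block.
have [x xB] := vertex_neq0 BV.
rewrite inE eq_sym; apply/set0Pn; exists (exist _ x xB); exact: in_setT.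
Qed.

End VertexSplit.

Section Edgeless.
Local Unset Implicit Arguments.
Variables (K : fieldType) (lam : gfamily K).
Hypothesis lam_char : is_character lam.
Hypothesis lam_block : forall (T : finType), (0 < #|T|)%N ->
      forall G : graph T, gV G = [set [set: T]] -> lam T G != 0.
Local Set Implicit Arguments.

Lemma character_edgeless_neq0_rec n (T : finType) (G : graph T) :
  #|gV G| = n -> gE G = set0 -> lam T G != 0.
Proof.
elim: n T G => [|n IH] T G hn h0.
  move/eqP: hn; rewrite cards_eq0 => /eqP/card_vertices0 T0.
  by rewrite (character_unital lam_char T0) oner_neq0.
have [B BV] : exists B, B \in gV G by apply/card_gt0P; rewrite hn.
have hU := edgeless_graph_union (partition_block_vertices BV)
  (partition_other_vertices BV) (gV_split_block BV) h0.
rewrite (character_union lam_char (split_block B) hU) mulf_neq0 //.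
  have [x xB] := vertex_neq0 BV.
  apply: lam_block; first by apply/card_gt0P; exists (exist _ x xB).
  by rewrite /gV /= block_vertices_single.
by apply: IH => //; move: hn; rewrite (card_other_vertices BV) => -[].
Qed.

Lemma character_edgeless_neq0 (T : finType) : nz_edgeless (lam T).
Proof. by move=> H; apply: character_edgeless_neq0_rec. Qed.

End Edgeless.

Lemma card_restr_union_lt (T1 T2 U : finType) (f1 : T1 -> U) (f2 : T2 -> U)
    (sp : split_of f1 f2) G1 G2 G Q1 Q2 :
  graph_union f1 f2 G1 G2 G -> admissible G1 Q1 -> admissible G2 Q2 ->
  ~~ ((Q1 == components G1) && (Q2 == components G2)) ->
  (#|gE (restr G (part_union f1 f2 Q1 Q2))| < #|gE G|)%N.
Proof.
move=> hU a1 a2 hne; have hR := graph_union_restr sp hU Q1 Q2.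
rewrite (card_edges_union sp hR) (card_edges_union sp hU).
have l1 : (#|gE (restr G1 Q1)| <= #|gE G1|)%N by rewrite gE_restr subset_leq_card ?restr_edges_sub.
have l2 : (#|gE (restr G2 Q2)| <= #|gE G2|)%N by rewrite gE_restr subset_leq_card ?restr_edges_sub.
case/nandP: hne => hne.
  have : restr_edges G1 Q1 != gE G1 by apply: contraNneq hne => /(components_unique a1) ->.
  by move/card_restr_lt => lt1; rewrite -addSn leq_add.
have : restr_edges G2 Q2 != gE G2 by apply: contraNneq hne => /(components_unique a2) ->.
by move/card_restr_lt => lt2; rewrite -addnS leq_add.
Qed.

Lemma restr_union_components (T1 T2 U : finType) (f1 : T1 -> U) (f2 : T2 -> U)
    (sp : split_of f1 f2) G1 G2 G :
  graph_union f1 f2 G1 G2 G -> restr G (part_union f1 f2 (components G1) (components G2)) = G.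
Proof.
move=> hU; apply: restr_id; apply/eqP; rewrite eqEcard restr_edges_sub /=.
have hR := graph_union_restr sp hU (components G1) (components G2).
rewrite -gE_restr (card_edges_union sp hR) (card_edges_union sp hU).
by rewrite !gE_restr !restr_edges_components.
Qed.

Section StarUnion.
Local Unset Implicit Arguments.
Variables (K : fieldType) (lam : gfamily K).
Local Set Implicit Arguments.
Hypothesis lam_char : is_character lam.
Variables (T1 T2 U : finType) (f1 : T1 -> U) (f2 : T2 -> U).
Hypothesis sp : split_of f1 f2.
Variables (G1 : graph T1) (G2 : graph T2) (G : graph U).
Hypothesis hU : graph_union f1 f2 G1 G2 G.
Variables (m : graph U -> K) (m1 : graph T1 -> K) (m2 : graph T2 -> K).
Hypothesis m_restr : forall Q1 Q2, admissible G1 Q1 -> admissible G2 Q2 ->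
  ~~ ((Q1 == components G1) && (Q2 == components G2)) ->
  m (restr G (part_union f1 f2 Q1 Q2)) = m1 (restr G1 Q1) * m2 (restr G2 Q2).

Lemma starT_union :
  starT (lam U) m G = starT (lam T1) m1 G1 * starT (lam T2) m2 G2 +
    lam T1 (quot G1 (components G1)) * lam T2 (quot G2 (components G2)) * (m G - m1 G1 * m2 G2).
Proof.
set c := _ * _ * (_ - _).
pose top Q1 Q2 := (Q1 == components G1) && (Q2 == components G2).
have term Q1 Q2 : admissible G1 Q1 -> admissible G2 Q2 ->
    lam U (quot G (part_union f1 f2 Q1 Q2)) * m (restr G (part_union f1 f2 Q1 Q2)) =
    lam T1 (quot G1 Q1) * m1 (restr G1 Q1) * (lam T2 (quot G2 Q2) * m2 (restr G2 Q2)) +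
    (if top Q1 Q2 then c else 0).
  move=> a1 a2; rewrite (character_union lam_char sp (graph_union_quot sp hU a1 a2)).
  case: ifP => [/andP[/eqP -> /eqP ->] | /negbT hne]; last by rewrite m_restr // addr0; ring.
  rewrite (restr_union_components sp hU) !restr_id ?restr_edges_components //.
  by rewrite /c; ring.
have top_sum : \sum_(Q1 | admissible G1 Q1) \sum_(Q2 | admissible G2 Q2)
    (if top Q1 Q2 then c else 0) = c.
  rewrite (bigD1 (components G1)) ?admissible_components //= [X in _ + X]big1 ?addr0.
    rewrite (bigD1 (components G2)) ?admissible_components //= /top !eqxx.
    by rewrite [X in _ + X]big1 ?addr0 // => Q2 /andP[_ /negbTE ->]; rewrite andbF.
  by move=> Q1 /andP[_ /negbTE nQ]; apply: big1 => Q2 _; rewrite /top nQ.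
rewrite /starT (big_admissible_union sp hU) -top_sum mulr_suml -big_split /=.
apply: eq_bigr => Q1 a1; rewrite mulr_sumr -big_split /=.
by apply: eq_bigr => Q2 a2; rewrite term // mulrA.
Qed.

End StarUnion.

Local Unset Implicit Arguments.
Definition char_inv (K : fieldType) (lam : gfamily K) : gfamily K := fun T => rinv (lam T).
Arguments char_inv {K} lam.
Local Set Implicit Arguments.

Section Inverse.
Local Unset Implicit Arguments.
Variables (K : fieldType) (lam : gfamily K).
Hypothesis lam_char : is_character lam.
Hypothesis lam_edgeless : forall T : finType, nz_edgeless (lam T).
Local Set Implicit Arguments.

Lemma starT_char_inv (T : finType) G : starT (lam T) (char_inv lam T) G = eps' K T G.
Proof. exact: starT_rinv. Qed.

Lemma char_inv_starT (T : finType) G : starT (char_inv lam T) (lam T) G = eps' K T G.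
Proof. exact: rinv_starT. Qed.

Lemma unital_char_inv : unital (char_inv lam).
Proof.
move=> T T0 G; have h0 : gE G = set0.
  apply/setP => e; rewrite in_set0; apply/negP => /edge_set2[v [w [vV _ _ _]]].
  by case: (vertex_neq0 vV) => x _; move: (card0_eq T0 x).
have := starT_char_inv G; rewrite starT_edgeless //.
by rewrite (character_unital lam_char T0) mul1r /eps' h0 eqxx.
Qed.

Lemma char_inv_union n (T1 T2 U : finType) (f1 : T1 -> U) (f2 : T2 -> U)
    (sp : split_of f1 f2) G1 G2 G :
  graph_union f1 f2 G1 G2 G -> (#|gE G| < n)%N ->
  char_inv lam U G = char_inv lam T1 G1 * char_inv lam T2 G2.
Proof.
elim: n T1 T2 U f1 f2 sp G1 G2 G => // n IH T1 T2 U f1 f2 sp G1 G2 G hU hn.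
have m_restr Q1 Q2 : admissible G1 Q1 -> admissible G2 Q2 ->
    ~~ ((Q1 == components G1) && (Q2 == components G2)) ->
    char_inv lam U (restr G (part_union f1 f2 Q1 Q2)) =
    char_inv lam T1 (restr G1 Q1) * char_inv lam T2 (restr G2 Q2).
  move=> a1 a2 hne; apply: (IH _ _ _ _ _ sp _ _ _ (graph_union_restr sp hU Q1 Q2)).
  exact: leq_trans (card_restr_union_lt sp hU a1 a2 hne) hn.
have := starT_union lam_char sp hU m_restr.
rewrite !starT_char_inv (eps'_union sp hU) -{1}[eps' K T1 G1 * _]addr0.
move=> /addrI /esym /eqP; rewrite !mulf_eq0 subr_eq0.
rewrite !(negbTE (lam_edgeless _ _ (quot_components_edgeless _))).
by move/eqP.
Qed.

Lemma multiplicative_char_inv : Defs.multiplicative (char_inv lam).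
Proof. by move=> T1 T2 G1 G2 G hV hE; apply: (char_inv_union (split_sum T1 T2)). Qed.

Lemma partition_void : partition (set0 : {set {set void}}) [set: void].
Proof. by apply/partition_setTP; split; [rewrite in_set0 | case | case]. Qed.

(* A bijection f splits its codomain into the image of f and that of the empty type. *)
Lemma bij_invariant_char_inv : bij_invariant (char_inv lam).
Proof.
move=> T T' f fb G G' hV hE.
pose f0 (v : void) : T' := match v with end.
have sp : split_of f f0.
  split; [exact: bij_inj | by case | by move=> x [] |].
  by move=> u; case: fb => g fK gK; left; exists (g u); rewrite gK.
have hU : graph_union f f0 G (discrete_graph partition_void) G'.
  by split; rewrite ?hV ?hE /part_union /imV /imE /gV /gE /= imset0 setU0.
by rewrite (char_inv_union sp hU (ltnSn _)) (unital_char_inv card_void) mulr1.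
Qed.

Lemma character_char_inv : is_character (char_inv lam).
Proof.
by split; [exact: bij_invariant_char_inv | exact: multiplicative_char_inv | exact: unital_char_inv].
Qed.

End Inverse.

Theorem lemma49 (K : fieldType) (lam : gfamily K) :
  is_character lam ->
  (star_invertible lam <->
   (forall (T : finType), (0 < #|T|)%N ->
      forall G : graph T, gV G = [set [set: T]] -> lam T G != 0)).
Proof.
move=> lam_char; split.
  case=> mu [_ mu_inv] T _ G hG.
  have h0 := single_vertex_edgeless hG.
  have [e _] := mu_inv T G.
  change (starT (lam T) (mu T) G = eps' K T G) in e.
  move: e; rewrite starT_edgeless // /eps' h0 eqxx => e.
  by apply/negP => /eqP z; move: e; rewrite z mul0r => /eqP; rewrite eq_sym oner_eq0.
move=> lam_block; have lam_edgeless := character_edgeless_neq0 lam_char lam_block.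
exists (char_inv lam); split; first exact: character_char_inv.
by move=> T G; split; [exact: starT_char_inv | exact: char_inv_starT].
Qed.
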